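(* Let $\theta=(\tau,\ell)\in\mathscr S$, let $\eta\in\{0,1\}$, let $q=\Phi(\theta,\eta)$, and let $\gamma$ be a proper geodesic ray of $q$ emanating from $\varnothing$. Then: 1. If $c$ is a corner incident to $\gamma(i)$ lying on the left-hand side of $\tau$, then $c^{\gamma_{\max}}(i)\le c\le c^{\gamma_{\min}}(i)$. 2. For every $i\ge0$, the vertices $\gamma(i+1),\gamma(i+2),\dots$ do not belong to $[[\varnothing,\gamma(i)]]$. 3. For every $i\ge0$, if $\gamma(i)$ is incident to the left-hand side of $\tau$, then there exists a unique $j\le i$ such that $[[\varnothing,\gamma(i)]]$ contains $\gamma_{\min}(j)$ and $[[\gamma_{\min}(j),\gamma(i)]]\setminus\{\gamma_{\min}(j)\}$ does not intersect the spine of $\tau$.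
   Context: **The set $\mathscr S$.** It is the set of infinite labeled plane trees with root label 0, integer labels differing by at most 1 along edges, exactly one spine $\varnothing=S(0),S(1),\dots$, and $\inf_i\ell(S(i))=-\infty$. $[[a,b]]$ denotes the vertex set of the path from $a$ to $b$ in $\tau$. **Corners and sides.** The left-hand side of $\tau$ consists of the spine and the subtrees grafted to its left. Corners are indexed by $\mathbb Z$: $c_0,c_1,\dots$ are the left-side corners in clockwise contour order from the root corner $c_0$, and $c_{-1},c_{-2},\dots$ are the right-side corners in counterclockwise order. Corners are ordered by index. The successor $\mathcal S(c_i)$ is the first $c_j$, $j>i$, with $\ell(c_j)=\ell(c_i)-1$. $\mathcal V(c)$ is the vertex of corner $c$. **The quadrangulation $\Phi(\theta,\eta)$.** It has vertex set $V(\tau)$ and edges the arcs from each corner to its successor. It is rooted at the arc from $c_0$ to its successor, with orientation reversed iff $\eta=1$. **Proper geodesic rays.** A proper geodesic ray emanating from $\varnothing$ is an infinite path $(\gamma(0)=\varnothing,\gamma(1),\dots)$ with $\ell(\gamma(i))=-i$. Each of its steps from $\gamma(i)$ to $\gamma(i+1)$ is an arc from a corner $c^\gamma(i)$ incident to $\gamma(i)$ to its successor. **Maximal and minimal geodesics.** The maximal geodesic is $\gamma_{\max}(i)=\mathcal V(\mathcal S^{(i)}(c_0))$, with $c^{\gamma_{\max}}(i)=\mathcal S^{(i)}(c_0)$. The minimal geodesic is given by $\gamma_{\min}(0)=\varnothing$, where $c^{\gamma_{\min}}(n)$ is the last corner among $c_0,c_1,\dots$ incident to $\gamma_{\min}(n)$,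 and $\gamma_{\min}(n+1)=\mathcal V(\mathcal S(c^{\gamma_{\min}}(n)))$. *)

From mathcomp Require Import all_boot all_order all_algebra.
From Stdlib Require Import ClassicalEpsilon.
Set Implicit Arguments. Unset Strict Implicit. Unset Printing Implicit Defensive.
Import Order.TTheory GRing.Theory Num.Theory.
Local Open Scope ring_scope.

(* ---------- Plane trees (Ulam-Harris / Neveu formalism) ----------
   A (locally finite) plane tree is given by nch : seq nat -> nat, the number
   of children of each word; the children of u are rcons u 0, ..., rcons u (nch u).-1
   in left-to-right order.  Vertices are the words reachable from the root [::]. *)
Definition vertex := seq nat.

Definition vtx (nch : vertex -> nat) (u : vertex) : bool :=
  all (fun i => (nth 0%N u i < nch (take i u))%N) (iota 0 (size u)).

Definition is_ray (nch : vertex -> nat) (r : nat -> vertex) : Prop :=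
  r 0%N = [::] /\
  forall n, exists j, (j < nch (r n))%N /\ r n.+1 = rcons (r n) j.

Definition in_S (nch : vertex -> nat) (lab : vertex -> int) : Prop :=
  lab [::] = 0 /\
  (forall u j, vtx nch u -> (j < nch u)%N -> `|lab (rcons u j) - lab u| <= 1) /\
  (exists S : nat -> vertex,
      is_ray nch S /\
      (forall S', is_ray nch S' -> forall n, S' n = S n) /\
      (forall M : int, exists n, lab (S n) < M)).

(* vertex on the spine (= on some, hence the unique, infinite ray) *)
Definition on_spine (nch : vertex -> nat) (x : vertex) : Prop :=
  exists S, is_ray nch S /\ exists n, S n = x.

Fixpoint lcp (a b : vertex) : vertex :=
  match a, b with
  | x :: a', y :: b' => if x == y then x :: lcp a' b' else [::]
  | _, _ => [::]
  end.

(* x belongs to the vertex set of the geodesic path from a to b in tau *)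
Definition tpath (a b x : vertex) : bool :=
  (prefix x a || prefix x b) && prefix (lcp a b) x.

(* For a non-root u, m ranges over 0..nch u: corner m is
   the corner of u visited just before going to child m (m = 0: just after
   arriving from the parent), the corner nch u being the one before going back
   to the parent.  For the root, m ranges over 0..(nch [::]).-1; (root, 0) is the
   root corner c_0 (between the last and the first child). *)
Definition corner := (vertex * nat)%type.

(* next corner in the (clockwise, leftmost-child-first) contour *)
Definition csucc (nch : vertex -> nat) (c : corner) : corner :=
  let: (u, m) := c in
  if (m < nch u)%N then (rcons u m, 0%N)
  else if u is [::] then c
  else let p := take (size u).-1 u in let j := last 0%N u in
       (p, if (p == [::]) && (j.+1 == nch p) then 0%N else j.+1).

Definition cpred (nch : vertex -> nat) (c : corner) : corner :=
  let: (u, m) := c in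
  if (0 < m)%N then let w := rcons u m.-1 in (w, nch w)
  else if u is [::] then let w := rcons [::] (nch [::]).-1 in (w, nch w)
  else (take (size u).-1 u, last 0%N u).

Definition c0 : corner := ([::], 0%N).

(* the corner c_i, i in Z: c_0, c_1, ... clockwise (left-hand side),
   c_{-1}, c_{-2}, ... counterclockwise (right-hand side) *)
Definition cornerZ (nch : vertex -> nat) (i : int) : corner :=
  match i with
  | Posz n => iter n (csucc nch) c0
  | Negz n => iter n.+1 (cpred nch) c0
  end.

Definition cV (nch : vertex -> nat) (i : int) : vertex := (cornerZ nch i).1.

Definition clab (nch : vertex -> nat) (lab : vertex -> int) (i : int) : int :=
  lab (cV nch i).

(* successor S(c_i) = c_j, j the first index > i with l(c_j) = l(c_i) - 1
   (returns i itself if there is none; this never happens for theta in S) *)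
Definition csuccessor (nch : vertex -> nat) (lab : vertex -> int) (i : int) : int :=
  match excluded_middle_informative
          (exists n : nat, clab nch lab (i + n.+1%:Z) == clab nch lab i - 1) with
  | left H => i + (ex_minn H).+1%:Z
  | right _ => i
  end.

Record quad := Quad {
  qvert : vertex -> Prop;
  qadj  : vertex -> vertex -> Prop;
  qroot : vertex * vertex
}.

Definition Phi (nch : vertex -> nat) (lab : vertex -> int) (eta : bool) : quad :=
  Quad (fun u => vtx nch u)
       (fun u v => exists i : int,
            (cV nch i = u /\ cV nch (csuccessor nch lab i) = v) \/
            (cV nch i = v /\ cV nch (csuccessor nch lab i) = u))
       (let a := cV nch 0 in let b := cV nch (csuccessor nch lab 0) in
        if eta then (b, a) else (a, b)).

Definition proper_geodesic_ray (lab : vertex -> int) (q : quad)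
    (gamma : nat -> vertex) : Prop :=
  gamma 0%N = [::] /\
  (forall i, qvert q (gamma i)) /\
  (forall i, lab (gamma i) = - (i%:Z)) /\
  (forall i, qadj q (gamma i) (gamma i.+1)).

Definition cmax (nch : vertex -> nat) (lab : vertex -> int) (i : nat) : int :=
  iter i (csuccessor nch lab) 0.

Definition gmax (nch : vertex -> nat) (lab : vertex -> int) (i : nat) : vertex :=
  cV nch (cmax nch lab i).

Definition lastc (nch : vertex -> nat) (v : vertex) : nat :=
  match excluded_middle_informative
          (exists n : nat, cV nch n = v /\
             (forall m : nat, cV nch m = v -> (m <= n)%N)) with
  | left H => proj1_sig (constructive_indefinite_description _ H)
  | right _ => 0%N
  end.

Fixpoint gmin (nch : vertex -> nat) (lab : vertex -> int) (n : nat) : vertex :=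
  match n with
  | 0%N => [::]
  | n'.+1 => cV nch (csuccessor nch lab (lastc nch (gmin nch lab n')))
  end.

Definition cmin (nch : vertex -> nat) (lab : vertex -> int) (n : nat) : int :=
  (lastc nch (gmin nch lab n))%:Z.

(* A step of a proper geodesic ray goes from a corner [c] of [gamma i] to its successor.
   Between [c] and its successor the contour only meets labels [>= l(c)], and it can only
   enter a subtree through its root, so every strict ancestor of a vertex of the ray has a
   larger label; this gives 2. Along the left side of the tree, corners are visited in the
   lexicographic order of the words [rcons u m], so between two visits of a vertex the
   contour stays in its subtree. Since the successor map is monotone on corners of equal
   label, the successor of a left corner of [gamma i] comes at or before that of
   [c^{gamma_min}(i)]; a later visit of [gamma i.+1] would then make it [gamma_min(i+1)] or
   one of its strict ancestors with the same label, which gives 1. For 3, take the first [j]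
   whose corner [c^{gamma_min}(j)] comes at or after a visit of [gamma i]; it is unique
   because after its last visit the contour never returns into the subtree of an off-spine
   vertex, nor leaves the subtree of the next spine vertex after the last visit of a spine
   vertex. *)

From mathcomp Require Import all_boot all_order all_algebra.
From mathcomp Require Import zify.
From Stdlib Require Import ClassicalEpsilon Classical.
Set Implicit Arguments. Unset Strict Implicit. Unset Printing Implicit Defensive.
Import Order.TTheory GRing.Theory Num.Theory.

Section Prefix.
Variable T : eqType.
Implicit Types a b c s : seq T.

Lemma prefix_rcons_eq a s x : prefix a (rcons s x) -> ~~ prefix a s -> a = rcons s x.
Proof.
move=> /prefixP[[|y r] E] hn; first by rewrite E cats0.
move: E; rewrite lastI -rcons_cat => /rcons_inj[Es _].
by move: hn; rewrite Es prefix_prefix.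
Qed.

Lemma prefix_total a b c : prefix a c -> prefix b c -> prefix a b || prefix b a.
Proof.
move=> ha hb.
have ea : a = take (size a) c by apply/esym/eqP; rewrite -prefixE.
have eb : b = take (size b) c by apply/esym/eqP; rewrite -prefixE.
case: (leqP (size a) (size b)) => h.
  by rewrite [a]ea -(take_takel _ h) -eb prefix_take.
by rewrite [b]eb -(take_takel _ (ltnW h)) -ea prefix_take orbT.
Qed.

Lemma prefix_antisym a b : prefix a b -> prefix b a -> a = b.
Proof.
move=> h1 h2; move: (size_prefix h1) (size_prefix h2) => s1 s2.
move: h1; rewrite prefixE => /eqP <-.
by rewrite take_oversize // (@leq_trans (size a)).
Qed.

Lemma take_rcons_belast s x : take (size (rcons s x)).-1 (rcons s x) = s.
Proof. by rewrite size_rcons -cats1 takel_cat // take_size. Qed.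

End Prefix.

Lemma lcp_prefix a b : prefix a b -> lcp a b = a.
Proof. by elim: a b => [|x a IH] [|y b] //= /andP[/eqP -> h]; rewrite eqxx IH. Qed.

Section Lexicographic.
Variables (d : Order.disp_t) (T : orderType d).
Implicit Types s : seq T.
Local Open Scope order_scope.

Lemma ltxi_catl p s1 s2 : (p ++ s1 < p ++ s2 :> seqlexi T) = (s1 < s2 :> seqlexi T).
Proof. by elim: p => //= x p IH; rewrite eqhead_ltxiE. Qed.

Lemma ltxi_catr s r : (s < s ++ r :> seqlexi T) = (r != [::]).
Proof. by elim: s => [|y s IH] /=; rewrite ?ltxi0s ?eqhead_ltxiE. Qed.

Lemma lexi_prefix s r : prefix s r -> s <= r :> seqlexi T.
Proof. by move=> /prefixP[[|x r'] ->]; rewrite ?cats0 // ltW // ltxi_catr. Qed.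

Lemma ltxi_cat_lthead p x y s1 s2 : x < y -> p ++ x :: s1 < p ++ y :: s2 :> seqlexi T.
Proof. by move=> lt_xy; rewrite ltxi_catl ltxi_cons (ltW lt_xy) lt_geF. Qed.

Lemma ltxi_rcons2 s x y : (rcons s x < rcons s y :> seqlexi T) = (x < y).
Proof. by rewrite -!cats1 ltxi_catl ltxi_cons ltxis0 implybF; case: ltgtP. Qed.

Lemma lexi_between s x y r :
  rcons s x <= r :> seqlexi T -> r <= rcons s y :> seqlexi T -> prefix s r && (r != s).
Proof.
elim: s r => [|z s IH] [|w r] //=; rewrite !lexi_cons eqseq_cons.
by case: (ltgtP z w) => //= _; exact: IH.
Qed.

End Lexicographic.

Local Open Scope ring_scope.

Lemma nat_of_nonneg (k : int) : 0 <= k -> k = (absz k)%:Z.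
Proof. lia. Qed.

Section Tree.
Variables (nch : vertex -> nat) (lab : vertex -> int) (S : nat -> vertex).
Hypothesis S_ray : is_ray nch S.
Hypothesis S_uniq : forall S', is_ray nch S' -> forall n, S' n = S n.
Hypothesis lab_root : lab [::] = 0.
Hypothesis lab_edge :
  forall u j, vtx nch u -> (j < nch u)%N -> `|lab (rcons u j) - lab u| <= 1.
Hypothesis lab_spine_unbounded : forall M : int, exists n, lab (S n) < M.

Local Notation V := (cV nch).
Local Notation L := (clab nch lab).
Local Notation Sc := (csuccessor nch lab).

Lemma vtx_rcons u j : vtx nch (rcons u j) = vtx nch u && (j < nch u)%N.
Proof.
rewrite /vtx size_rcons -addn1 iotaD all_cat /= add0n andbT.
rewrite nth_rcons ltnn eqxx -cats1 takel_cat // take_size.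
congr (_ && _); apply: eq_in_all => i; rewrite mem_iota add0n => /andP[_ hi].
by rewrite nth_cat hi takel_cat // ltnW.
Qed.

Definition spine_child t := last 0%N (S t.+1).

Lemma spine0 : S 0 = [::].
Proof. by case: S_ray. Qed.

Lemma spineS t : S t.+1 = rcons (S t) (spine_child t) /\ (spine_child t < nch (S t))%N.
Proof. by case: S_ray => _ /(_ t) [j [hj E]]; rewrite /spine_child E last_rcons. Qed.

Lemma size_spine t : size (S t) = t.
Proof. by elim: t => [|t IH]; rewrite ?spine0 // (spineS t).1 size_rcons IH. Qed.

Lemma spine_inj : injective S.
Proof. by move=> s t E; rewrite -(size_spine s) -(size_spine t) E. Qed.

Lemma spine_prefix s t : (s <= t)%N -> prefix (S s) (S t).
Proof.
elim: t => [|t IH]; first by rewrite leqn0 => /eqP ->; exact: prefix_refl.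
rewrite leq_eqVlt => /orP[/eqP ->|h]; first exact: prefix_refl.
by rewrite (spineS t).1; apply: prefix_trans (IH h) (prefix_rcons _ _).
Qed.

Lemma prefix_spine u t : prefix u (S t) -> u = S (size u).
Proof.
move=> h; have hs := size_prefix h; rewrite size_spine in hs.
move: h (spine_prefix hs); rewrite !prefixE size_spine => /eqP E /eqP E2.
by rewrite -{1}E E2.
Qed.

Lemma spine_cat s t : (s < t)%N -> exists r, S t = S s ++ spine_child s :: r.
Proof.
by move/spine_prefix; rewrite (spineS s).1 => /prefixP[r ->]; exists r; rewrite cat_rcons.
Qed.

Lemma vtx_spine t : vtx nch (S t).
Proof.
elim: t => [|t IH]; first by rewrite spine0.
by rewrite (spineS t).1 vtx_rcons IH (spineS t).2.
Qed.

Lemma nch_root : (0 < nch [::])%N.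
Proof. by have := (spineS 0).2; rewrite spine0; case: (nch [::]). Qed.

Lemma on_spineE x : on_spine nch x <-> exists t, S t = x.
Proof.
split; first by case=> S' [hr [n <-]]; exists n; rewrite (S_uniq hr).
by case=> t <-; exists S; split => //; exists t.
Qed.

Definition valid_corner (c : corner) :=
  [&& vtx nch c.1, (c.2 <= nch c.1)%N & (c.1 == [::]) ==> (c.2 < nch c.1)%N].

Lemma csucc_rcons (p : seq nat) j :
  csucc nch (rcons p j, nch (rcons p j)) =
  (p, if (p == [::]) && (j.+1 == nch p) then 0%N else j.+1).
Proof.
rewrite /csucc ltnn take_rcons_belast last_rcons.
by case E: (rcons p j) => //; move: E; case: p.
Qed.

Lemma cpred_rcons (p : seq nat) j : cpred nch (rcons p j, 0%N) = (p, j).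
Proof.
rewrite /cpred /= take_rcons_belast last_rcons.
by case E: (rcons p j) => //; move: E; case: p.
Qed.

Lemma valid_csucc c : valid_corner c -> valid_corner (csucc nch c).
Proof.
case: c => u m /and3P[hv hm hr]; rewrite /= in hv hm hr.
case: (ltnP m (nch u)) => hmu.
  by rewrite /csucc /= hmu /valid_corner /= vtx_rcons hv hmu; case: (u).
have -> : m = nch u by apply/eqP; rewrite eqn_leq hm hmu.
case/lastP: u hv hm hr hmu => [|p j] hv hm hr hmu.
  by move: hr; rewrite eqxx /= ltnNge hmu.
rewrite csucc_rcons /valid_corner /=; move: hv; rewrite vtx_rcons => /andP[-> hj] /=.
case: ifP => [/andP[/eqP -> _]|hn]; first by rewrite eqxx /= nch_root.
rewrite hj /=; apply/implyP => /eqP Ep; move: hn; rewrite Ep eqxx /= => /negbT hn.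
by rewrite ltn_neqAle hn -Ep hj.
Qed.

Lemma valid_cpred c : valid_corner c -> valid_corner (cpred nch c).
Proof.
case: c => u [|m] /and3P[hv hm hr]; rewrite /= in hv hm hr; last first.
  by rewrite /cpred /valid_corner /= -/(rcons u m) vtx_rcons hv hm leqnn /=; case: (u).
case/lastP: u hv hm hr => [|p j] hv hm hr.
  by rewrite /cpred /valid_corner /= /vtx /= andbT leqnn andbT andbT prednK ?nch_root.
rewrite cpred_rcons /valid_corner /=; move: hv; rewrite vtx_rcons => /andP[-> hj] /=.
by rewrite (ltnW hj) hj implybT.
Qed.

Lemma cornerZ_succ (n : nat) : cornerZ nch n.+1 = csucc nch (cornerZ nch n).
Proof. by []. Qed.

Lemma cornerZ_pred (n : nat) : cornerZ nch (- n.+1%:Z) = cpred nch (cornerZ nch (- n%:Z)).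
Proof. by case: n. Qed.

Lemma cornerZ_add (p a : nat) : cornerZ nch (a + p)%N = iter a (csucc nch) (cornerZ nch p).
Proof. by rewrite /= iterD. Qed.

Lemma valid_cornerZ (k : int) : valid_corner (cornerZ nch k).
Proof.
have valid_c0 : valid_corner c0 by rewrite /valid_corner /= nch_root.
case: k => n; first by elim: n => [|n IH] //; rewrite cornerZ_succ; exact: valid_csucc.
elim: n => [|n IH]; first exact: valid_cpred.
by rewrite -[Negz n.+1]/(- n.+2%:Z) cornerZ_pred; exact: valid_cpred.
Qed.

Definition tree_adj (a b : vertex) := exists j,
  (b = rcons a j /\ vtx nch a /\ (j < nch a)%N) \/
  (a = rcons b j /\ vtx nch b /\ (j < nch b)%N).

Lemma tree_adj_sym a b : tree_adj a b -> tree_adj b a.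
Proof. by case=> j [h|h]; exists j; [right|left]. Qed.

Lemma tree_adj_csucc c : valid_corner c -> tree_adj c.1 (csucc nch c).1.
Proof.
case: c => u m /and3P[hv hm hr]; rewrite /= in hv hm hr.
case: (ltnP m (nch u)) => hmu; first by exists m; left; rewrite /csucc /= hmu.
have -> : m = nch u by apply/eqP; rewrite eqn_leq hm hmu.
case/lastP: u hv hm hr hmu => [|p j] hv hm hr hmu.
  by move: hr; rewrite eqxx /= ltnNge hmu.
by rewrite csucc_rcons /=; move: hv; rewrite vtx_rcons => /andP[hp hj]; exists j; right.
Qed.

Lemma tree_adj_cpred c : valid_corner c -> tree_adj c.1 (cpred nch c).1.
Proof.
case: c => u [|m] /and3P[hv hm hr]; rewrite /= in hv hm hr; last first.
  by exists m; left; rewrite /cpred /=.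
case/lastP: u hv hm hr => [|p j] hv hm hr.
  by exists (nch [::]).-1; left; rewrite /cpred /= prednK ?nch_root.
by rewrite cpred_rcons /=; move: hv; rewrite vtx_rcons => /andP[hp hj]; exists j; right.
Qed.

Lemma tree_adj_cV (k : int) : tree_adj (V k) (V (k + 1)).
Proof.
case: k => n.
  have -> : Posz n + 1 = n.+1 by lia.
  by rewrite /cV cornerZ_succ; apply: tree_adj_csucc; exact: valid_cornerZ.
have -> : Negz n + 1 = - n%:Z by rewrite NegzE; lia.
rewrite -[Negz n]/(- n.+1%:Z) /cV cornerZ_pred; apply: tree_adj_sym.
by apply: tree_adj_cpred; exact: valid_cornerZ.
Qed.

Lemma clab_step (k : int) : `|L (k + 1) - L k| <= 1.
Proof.
rewrite /clab; case: (tree_adj_cV k) => j [[-> [hv hj]]|[-> [hv hj]]]; first exact: lab_edge.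
by rewrite distrC; exact: lab_edge.
Qed.

Lemma size_cV_le (n : nat) : (size (V n) <= n)%N.
Proof.
elim: n => [|n IH] //.
have [j [[E _]|[E _]]] := tree_adj_cV n; move: E; have -> : Posz n + 1 = n.+1 by lia.
  by move=> ->; rewrite size_rcons.
by move=> E; move: IH; rewrite E size_rcons => /ltnW /leqW.
Qed.

Lemma prefix_enter a v w : tree_adj v w -> ~~ prefix a v -> prefix a w -> w = a.
Proof.
case=> j [[-> _]|[-> _]] hn hp; first by rewrite (prefix_rcons_eq hp hn).
by move: hn; rewrite (prefix_trans hp (prefix_rcons w j)).
Qed.

Lemma prefix_exit a v w : tree_adj v w -> prefix a v -> ~~ prefix a w -> v = a.
Proof.
case=> j [[-> _]|[-> _]] hp hn; last by rewrite (prefix_rcons_eq hp hn).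
by move: hn; rewrite (prefix_trans hp (prefix_rcons v j)).
Qed.

Lemma contour_enter (a : vertex) (k : int) (d : nat) :
  ~~ prefix a (V k) -> prefix a (V (k + d%:Z)) ->
  exists n : int, k < n <= k + d%:Z /\ V n = a.
Proof.
move=> hn; elim: d => [|d IH]; first by rewrite addr0 (negbTE hn).
have -> : k + d.+1%:Z = (k + d%:Z) + 1 by lia.
case E: (prefix a (V (k + d%:Z))).
  by move=> _; case: (IH E) => n [hn1 hn2]; exists n; split => //; lia.
move=> h; exists (k + d%:Z + 1); split; first lia.
exact: prefix_enter (tree_adj_cV _) (negbT E) h.
Qed.

Definition contour_exits (w : vertex) :=
  exists N, iter N (csucc nch) (w, 0%N) = (w, nch w).

Lemma contour_exits_children w : w != [::] ->
  (forall j, (j < nch w)%N -> contour_exits (rcons w j)) -> contour_exits w.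
Proof.
move=> hw hc.
suff : forall m, (m <= nch w)%N -> exists N, iter N (csucc nch) (w, 0%N) = (w, m).
  by move/(_ (nch w) (leqnn _)).
elim=> [|m IH] hm; first by exists 0%N.
case: (IH (ltnW hm)) => N HN; case: (hc m hm) => N' HN'.
exists (N'.+1 + N.+1)%N.
have E1 : csucc nch (w, m) = (rcons w m, 0%N) by rewrite /csucc /= hm.
by rewrite iterD (iterS N) HN E1 iterS HN' csucc_rcons (negbTE hw).
Qed.

Definition trapping_child (w : vertex) : vertex :=
  match excluded_middle_informative
          (exists j, (j < nch w)%N /\ ~ contour_exits (rcons w j)) with
  | left H => rcons w (proj1_sig (constructive_indefinite_description _ H))
  | right _ => w
  end.

Lemma trapping_childP w : w != [::] -> ~ contour_exits w ->
  exists j, [/\ trapping_child w = rcons w j, (j < nch w)%N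
            & ~ contour_exits (trapping_child w)].
Proof.
move=> hw ht; rewrite /trapping_child.
case: excluded_middle_informative => [H|H]; last first.
  exfalso; apply: ht; apply: contour_exits_children => // j hj.
  by apply: NNPP => hnt; apply: H; exists j.
by case: (constructive_indefinite_description _ H) => j [hj hnt] /=; exists j; split.
Qed.

(* Otherwise iterating [trapping_child] would give a second infinite ray. *)
Lemma left_subtree_exits t m : (m < spine_child t)%N -> contour_exits (rcons (S t) m).
Proof.
move=> hm; apply: NNPP => hnt.
pose w0 := rcons (S t) m.
have trap s : iter s trapping_child w0 != [::] /\ ~ contour_exits (iter s trapping_child w0).
  elim: s => [|s [IH1 IH2]]; first by split => //; rewrite /w0; case: (S t).
  case: (trapping_childP IH1 IH2) => j [E _ h3].
  by rewrite iterS E; split => //; [case: (iter s trapping_child w0)|rewrite -E].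
pose r n := if (n <= t)%N then S n else iter (n - t.+1) trapping_child w0.
have r_ray : is_ray nch r.
  split; first by rewrite /r leq0n spine0.
  move=> n; rewrite /r; case: (ltngtP n t) => h.
  - exact: S_ray.2.
  - have -> : (n.+1 - t.+1 = (n - t.+1).+1)%N by lia.
    have [h1 h2] := trap (n - t.+1)%N.
    case: (trapping_childP h1 h2) => j [E hj _]; exists j; split => //; by rewrite iterS.
  - subst n; rewrite subnn /=; exists m; split => //.
    exact: ltn_trans hm (spineS t).2.
have := S_uniq r_ray t.+1.
rewrite /r ltnn subnn /= (spineS t).1 => /rcons_inj /(congr1 snd) /= E.
by rewrite E ltnn in hm.
Qed.

Lemma spine_corner_next t m (p : nat) : cornerZ nch p = (S t, m) ->
  (m < spine_child t)%N -> exists p' : nat, cornerZ nch p' = (S t, m.+1).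
Proof.
move=> Hp hm; have hmt : (m < nch (S t))%N := ltn_trans hm (spineS t).2.
case: (left_subtree_exits hm) => N HN.
have E1 : csucc nch (S t, m) = (rcons (S t) m, 0%N) by rewrite /csucc /= hmt.
exists (N.+1 + p.+1)%N; rewrite cornerZ_add cornerZ_succ Hp E1 iterS HN csucc_rcons.
by case: ifP => // /andP[_ /eqP E]; move: (spineS t).2; rewrite -E ltnNge hm.
Qed.

Lemma spine_corner_visited t m : (m <= spine_child t)%N ->
  exists p : nat, cornerZ nch p = (S t, m).
Proof.
elim: t m => [|t IH] m.
  elim: m => [|m IHm] hm; first by exists 0%N; rewrite spine0.
  by case: (IHm (ltnW hm)) => p Hp; exact: spine_corner_next Hp hm.
have [p0 Hp0] : exists p : nat, cornerZ nch p = (S t.+1, 0%N).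
  case: (IH _ (leqnn _)) => p Hp; exists p.+1.
  by rewrite cornerZ_succ Hp /csucc /= (spineS t).2 -(spineS t).1.
elim: m => [|m IHm] hm; first by exists p0.
by case: (IHm (ltnW hm)) => p Hp; exact: spine_corner_next Hp hm.
Qed.

Lemma lab_spine_ge t : - t%:Z <= lab (S t).
Proof.
elim: t => [|t IH]; first by rewrite spine0 lab_root.
by have := lab_edge (vtx_spine t) (spineS t).2; rewrite -(spineS t).1; lia.
Qed.

(* Witness: the first visit of a spine vertex deep enough to be labelled below [M]
   and to come after [k]. *)
Lemma exists_low_clab (k M : int) : exists n : nat, k < n%:Z /\ L n < M.
Proof.
case: (lab_spine_unbounded (- (`|M| + `|k| + 1))) => t ht.
have := lab_spine_ge t => hge.
case: (spine_corner_visited (leq0n (spine_child t))) => p hp.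
have hd := size_cV_le p; rewrite /cV hp /= size_spine in hd.
by exists p; split; [lia|rewrite /clab /cV hp /=; lia].
Qed.

Lemma clab_ivt (j : int) (d : nat) (v : int) : v <= L j -> L (j + d%:Z) <= v ->
  exists e : nat, (e <= d)%N /\ L (j + e%:Z) = v.
Proof.
move=> h0; elim: d => [|d IH].
  by rewrite addr0 => h; exists 0%N; split => //; rewrite addr0; lia.
have -> : j + d.+1%:Z = (j + d%:Z) + 1 by lia.
move=> h1; case: (lerP (L (j + d%:Z)) v) => h2.
  by case: (IH h2) => e [he1 he2]; exists e; split => //; exact: leqW.
exists d.+1; split => //; have := clab_step (j + d%:Z).
have -> : j + d.+1%:Z = (j + d%:Z) + 1 by lia.
lia.
Qed.

Lemma clab_reaches_pred (k : int) : exists n : nat, L (k + n.+1%:Z) == L k - 1.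
Proof.
case: (exists_low_clab k (L k - 1)) => p [hp1 hp2].
have := clab_step k => hst.
have [d Hd] : exists d : nat, p%:Z = k + 1 + d%:Z by exists (absz (p%:Z - (k + 1))%R); lia.
case: (@clab_ivt (k + 1) d (L k - 1)); [lia|rewrite -Hd; lia|].
by move=> e [_ he]; exists e; apply/eqP; rewrite -he; congr L; lia.
Qed.

Lemma csuccessorP (k : int) : exists n : nat, [/\ Sc k = k + n.+1%:Z, L (k + n.+1%:Z) = L k - 1 &
  forall m : nat, L (k + m.+1%:Z) == L k - 1 -> (n <= m)%N].
Proof.
rewrite /csuccessor; case: excluded_middle_informative => [H|H]; last first.
  by exfalso; apply: H; exact: clab_reaches_pred.
by case: ex_minnP => n hn hmin; exists n; split => //; exact/eqP.
Qed.

Lemma csuccessor_gt (k : int) : k < Sc k.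
Proof. by case: (csuccessorP k) => n [-> _ _]; lia. Qed.

Lemma clab_csuccessor (k : int) : L (Sc k) = L k - 1.
Proof. by case: (csuccessorP k) => n [-> h _]. Qed.

Lemma csuccessor_min (k j : int) : k < j -> L j = L k - 1 -> Sc k <= j.
Proof.
case: (csuccessorP k) => n [-> _ hmin] hkj hj.
have [m Hm] : exists m : nat, j = k + m.+1%:Z by exists (absz (j - k - 1)%R); lia.
by have := hmin m; rewrite -Hm hj eqxx => /(_ isT); lia.
Qed.

(* Labels change by at most one per step, so dropping below [L k] requires hitting [L k - 1]. *)
Lemma clab_ge_before_csuccessor (k j : int) : k < j -> j < Sc k -> L k <= L j.
Proof.
move=> h1 h2; case: (lerP (L k) (L j)) => // h3.
have := clab_step k => hst.
have [d Hd] : exists d : nat, j = k + 1 + d%:Z by exists (absz (j - (k + 1))%R); lia.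
case: (@clab_ivt (k + 1) d (L k - 1)); [lia|rewrite -Hd; lia|].
move=> e [he1 he2].
by have := csuccessor_min (_ : k < k + 1 + e%:Z) he2; lia.
Qed.

Lemma csuccessor_mono (a b : int) : a <= b -> L a = L b -> Sc a <= Sc b.
Proof.
move=> hab hl; case: (lerP (Sc a) b) => h; first by have := csuccessor_gt b; lia.
have : a = b \/ a < b by lia.
case=> [->|hb]; first exact: lexx.
apply: csuccessor_min; first by have := csuccessor_gt b; lia.
by rewrite clab_csuccessor hl.
Qed.

(* Corners are compared through the word [rcons u m], in lexicographic order: along the left
   side this is the contour order (increasing), along the right side its reverse. *)
Definition key (c : corner) : seqlexi nat := rcons c.1 c.2.

Definition left_side (c : corner) :=
  (exists t, c.1 = S t /\ (c.2 <= spine_child t)%N) \/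
  (exists t j w, c.1 = S t ++ j :: w /\ (j < spine_child t)%N).

Definition right_side (c : corner) :=
  (exists t, c.1 = S t /\ (spine_child t < c.2)%N) \/
  (exists t j w, c.1 = S t ++ j :: w /\ (spine_child t < j)%N).

Lemma key_cornerZ (k : int) : key (cornerZ nch k) = rcons (V k) (cornerZ nch k).2.
Proof. by []. Qed.

Lemma key_child_lt (u : vertex) m m' : (key (u, m) < key (rcons u m, m'))%O.
Proof. by rewrite /key /= -(cats1 (rcons u m)) ltxi_catr. Qed.

Lemma key_parent_lt (u : vertex) j m m' : (j < m)%N -> (key (rcons u j, m') < key (u, m))%O.
Proof. by move=> h; rewrite /key /= -!cats1 -catA ltxi_cat_lthead. Qed.

Lemma left_side_csucc c : valid_corner c -> left_side c ->
  left_side (csucc nch c) /\ (key c < key (csucc nch c))%O.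
Proof.
case: c => u m hv [[t [Eu hm]]|[t [j [w [Eu hj]]]]];
  rewrite /= in Eu; subst u; try rewrite /= in hm.
- have hmn : (m < nch (S t))%N := leq_ltn_trans hm (spineS t).2.
  have -> : csucc nch (S t, m) = (rcons (S t) m, 0%N) by rewrite /csucc /= hmn.
  split; last exact: key_child_lt.
  move: hm; rewrite leq_eqVlt => /orP[/eqP ->|hm].
    by left; exists t.+1; rewrite /= -(spineS t).1.
  by right; exists t, m, [::]; rewrite /= cats1.
- case: (ltnP m (nch (S t ++ j :: w))) => hmn.
    have -> : csucc nch (S t ++ j :: w, m) = (rcons (S t ++ j :: w) m, 0%N).
      by rewrite /csucc /= hmn.
    split; last exact: key_child_lt.
    by right; exists t, j, (rcons w m); rewrite /= rcons_cat rcons_cons.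
  move: hv => /and3P [_ hm _]; rewrite /= in hm.
  have -> : m = nch (S t ++ j :: w) by apply/eqP; rewrite eqn_leq hm hmn.
  have hjn : (j.+1 < nch (S t))%N := leq_ltn_trans hj (spineS t).2.
  case/lastP: w {hm hmn} => [|w x].
    rewrite cats1 csucc_rcons (ltn_eqF hjn) andbF.
    by split; [left; exists t|exact: key_parent_lt].
  rewrite -rcons_cons -rcons_cat csucc_rcons.
  have -> : (S t ++ j :: w == [::]) = false by case: (S t).
  by split; [right; exists t, j, w|exact: key_parent_lt].
Qed.

Lemma right_side_cpred c : valid_corner c -> right_side c ->
  right_side (cpred nch c) /\ (key (cpred nch c) < key c)%O.
Proof.
case: c => u m hv [[t [Eu hm]]|[t [j [w [Eu hj]]]]];
  rewrite /= in Eu; subst u; try rewrite /= in hm.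
- case: m hm hv => [|m] hm hv //.
  have -> : cpred nch (S t, m.+1) = (rcons (S t) m, nch (rcons (S t) m)) by [].
  split; last exact: key_parent_lt.
  move: hm; rewrite ltnS leq_eqVlt => /orP[/eqP <-|hm].
    by left; exists t.+1; rewrite /= -(spineS t).1; split => //; exact: (spineS t.+1).2.
  by right; exists t, m, [::]; rewrite /= cats1.
- case: m hv => [|m] hv.
    case/lastP: w hv => [|w x] hv.
      by rewrite cats1 cpred_rcons; split; [left; exists t|exact: key_child_lt].
    rewrite -rcons_cons -rcons_cat cpred_rcons.
    by split; [right; exists t, j, w|exact: key_child_lt].
  have -> : cpred nch (S t ++ j :: w, m.+1) =
    (rcons (S t ++ j :: w) m, nch (rcons (S t ++ j :: w) m)) by [].
  split; last exact: key_parent_lt.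
  by right; exists t, j, (rcons w m); rewrite /= rcons_cat rcons_cons.
Qed.

Lemma left_side_cornerZ (n : nat) : left_side (cornerZ nch n).
Proof.
elim: n => [|n IH]; first by left; exists 0%N; rewrite /= spine0.
by rewrite cornerZ_succ; exact: (left_side_csucc (valid_cornerZ _) IH).1.
Qed.

Lemma right_side_cornerZ (n : nat) : right_side (cornerZ nch (- n.+1%:Z)).
Proof.
elim: n => [|n IH]; last first.
  by rewrite cornerZ_pred; exact: (right_side_cpred (valid_cornerZ _) IH).1.
have -> : cornerZ nch (- 1%:Z) = ([:: (nch [::]).-1], nch [:: (nch [::]).-1]) by [].
have : (spine_child 0 <= (nch [::]).-1)%N.
  by rewrite -ltnS prednK ?nch_root // -spine0; exact: (spineS 0).2.
rewrite leq_eqVlt => /orP[/eqP E|h]; last by right; exists 0%N, (nch [::]).-1, [::]; rewrite spine0.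
left; exists 1%N; rewrite /= (spineS 0).1 spine0 E; split => //.
by have := (spineS 1).2; rewrite (spineS 0).1 spine0 /= E.
Qed.

Lemma key_cornerZ_lt (a b : nat) : (a < b)%N ->
  (key (cornerZ nch a) < key (cornerZ nch b))%O.
Proof.
elim: b => [|b IH] // hab.
have h1 := (left_side_csucc (valid_cornerZ b) (left_side_cornerZ b)).2.
rewrite cornerZ_succ; move: hab; rewrite ltnS leq_eqVlt => /orP[/eqP ->|h] //.
exact: lt_trans (IH h) h1.
Qed.

Lemma key_cornerZ_neg_lt (a b : nat) : (a < b)%N ->
  (key (cornerZ nch (- b.+1%:Z)) < key (cornerZ nch (- a.+1%:Z)))%O.
Proof.
elim: b => [|b IH] // hab.
have h1 := (right_side_cpred (valid_cornerZ _) (right_side_cornerZ b)).2.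
rewrite cornerZ_pred; move: hab; rewrite ltnS leq_eqVlt => /orP[/eqP ->|h] //.
exact: lt_trans h1 (IH h).
Qed.

Lemma cornerZ_lt_of_key_lt (a b : nat) :
  (key (cornerZ nch a) < key (cornerZ nch b))%O -> (a < b)%N.
Proof.
move=> h; case: (ltngtP a b) => // [hba|hab]; last by move: h; rewrite hab ltxx.
by move: (key_cornerZ_lt hba); rewrite lt_gtF.
Qed.

Lemma prefix_cV_between (a n b : nat) : (a <= n <= b)%N -> V a = V b -> prefix (V a) (V n).
Proof.
case/andP => h1 h2 E.
have key_le x y : (x <= y)%N -> (key (cornerZ nch x) <= key (cornerZ nch y))%O.
  by rewrite leq_eqVlt => /orP[/eqP ->|/key_cornerZ_lt/ltW].
have l1 := key_le _ _ h1; have l2 := key_le _ _ h2; rewrite !key_cornerZ -E in l1 l2.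
have /andP[hp hne] := lexi_between l1 l2.
apply/negPn/negP => hn.
by move: hne; rewrite -(prefix_rcons_eq hp hn) eqxx.
Qed.

(* The rank [m] of the visited corner [(x, m)] cannot grow forever, so some visit is the last. *)
Lemma exists_last_visit x (n0 : nat) : V n0 = x ->
  exists n : nat, V n = x /\ (forall m : nat, V m = x -> (m <= n)%N).
Proof.
move=> h0; apply: NNPP => H.
suff : forall r, exists n : nat, V n = x /\ (r <= (cornerZ nch n).2)%N.
  case/(_ (nch x).+1) => n [hn ht].
  by move: (valid_cornerZ n) => /and3P [_ hm _]; move: ht; rewrite ltnNge -hn hm.
elim=> [|r [n [hn ht]]]; first by exists n0.
have /not_all_ex_not [m hm] : ~ (forall m : nat, V m = x -> (m <= n)%N).
  by move=> hh; apply: H; exists n.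
have hmx : V m = x by apply: NNPP => hh; apply: hm => /hh.
have hnm : (n < m)%N by rewrite ltnNge; apply/negP => hh; apply: hm => _.
exists m; split => //.
have := key_cornerZ_lt hnm; rewrite !key_cornerZ hn hmx ltxi_rcons2.
exact: leq_ltn_trans ht.
Qed.

Lemma lastcP x (n0 : nat) : V n0 = x ->
  V (lastc nch x) = x /\ (forall m : nat, V m = x -> (m <= lastc nch x)%N).
Proof.
move=> h0; rewrite /lastc; case: excluded_middle_informative => [H|H].
  by case: (constructive_indefinite_description _ H).
by exfalso; apply: H; exact: exists_last_visit h0.
Qed.

Lemma spine_branch_child t t' j j' w w' :
  S t ++ j :: w = S t' ++ j' :: w' -> (t < t')%N -> j = spine_child t.
Proof.
move=> E /spine_cat[r Er]; move: E; rewrite Er -catA /= => /eqP.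
by rewrite eqseq_cat // eqxx eqseq_cons /= => /andP[/eqP].
Qed.

Lemma key_left_le_spine_edge c s : left_side c -> ~~ prefix (S s.+1) c.1 ->
  (key c <= key (S s, spine_child s))%O.
Proof.
rewrite /key /= -(spineS s).1.
have lt_ts t u : prefix (S t) u -> ~~ prefix (S s.+1) u -> (t < s.+1)%N.
  by move=> hp hn; rewrite ltnNge; apply: contra hn => /spine_prefix /prefix_trans; apply.
case=> [[t [E hm]]|[t [j [w [E hj]]]]]; rewrite E => hn.
- have [r ->] := spine_cat (lt_ts _ _ (prefix_refl _) hn).
  move: hm; rewrite leq_eqVlt -cats1 => /orP[/eqP ->|hm].
    by rewrite cats1 -cat_rcons; exact/lexi_prefix/prefix_prefix.
  exact/ltW/ltxi_cat_lthead.
- have [r ->] := spine_cat (lt_ts _ _ (prefix_prefix _ _) hn).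
  by apply/ltW; rewrite -cats1 -catA /=; exact: ltxi_cat_lthead.
Qed.

Lemma key_spine_lt_right c t m : right_side c -> ~~ prefix (S t) c.1 ->
  (key (S t, m) < key c)%O.
Proof.
have lt_st s u : prefix (S s) u -> ~~ prefix (S t) u -> (s < t)%N.
  by move=> hp hn; rewrite ltnNge; apply: contra hn => /spine_prefix /prefix_trans; apply.
case=> [[s [E hm]]|[s [j [w [E hj]]]]]; rewrite /key E => hn /=.
- have [r ->] := spine_cat (lt_st _ _ (prefix_refl _) hn).
  by rewrite rcons_cat rcons_cons -[rcons (S s) _]cats1; exact: ltxi_cat_lthead.
- have [r ->] := spine_cat (lt_st _ _ (prefix_prefix _ _) hn).
  by rewrite !rcons_cat !rcons_cons; exact: ltxi_cat_lthead.
Qed.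

Lemma key_spine_edge_lt_desc s u m : prefix (S s.+1) u ->
  (key (S s, spine_child s) < key (u, m))%O.
Proof.
rewrite /key /= -(spineS s).1 => /prefixP[r ->].
by rewrite rcons_cat ltxi_catr -size_eq0 size_rcons.
Qed.

Lemma spine_visit_before_desc (a n : nat) s :
  V a = S s -> prefix (S s.+1) (V n) -> (a < n)%N.
Proof.
move=> ha hn; apply: cornerZ_lt_of_key_lt.
apply: le_lt_trans (key_left_le_spine_edge (s := s) (left_side_cornerZ a) _) _.
  by rewrite /cV in ha; rewrite ha; apply/negP => /size_prefix; rewrite !size_spine ltnn.
by rewrite key_cornerZ; exact: key_spine_edge_lt_desc.
Qed.

Lemma desc_after_last_spine_visit s (n : nat) :
  (lastc nch (S s) < n)%N -> prefix (S s.+1) (V n).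
Proof.
move=> hn; case: (spine_corner_visited (leqnn (spine_child s))) => p hp.
have hVp : V p = S s by rewrite /cV hp.
have hpn : (p < n)%N := leq_ltn_trans ((lastcP hVp).2 _ hVp) hn.
apply: contraLR (key_cornerZ_lt hpn) => hn'; rewrite hp -leNgt.
exact: key_left_le_spine_edge (left_side_cornerZ n) hn'.
Qed.

(* Back in the subtree of [z] after its last visit, the contour could never leave it again
   (leaving passes through [z]), yet it reaches arbitrarily deep spine vertices. *)
Lemma off_spine_after_last_visit z (n0 n : nat) : ~ (exists t, S t = z) -> V n0 = z ->
  (lastc nch z < n)%N -> ~~ prefix z (V n).
Proof.
move=> hz h0 hn; apply/negP => hp.
have [_ hmax] := lastcP h0.
have stay (d : nat) : prefix z (V (n + d)%N).
  elim: d => [|d IH]; first by rewrite addn0.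
  apply/negPn/negP => hn'.
  have := prefix_exit (tree_adj_cV (n + d)%N) IH.
  have -> : ((n + d)%N%:Z + 1) = (n + d.+1)%N by lia.
  move=> /(_ hn') /hmax; rewrite leqNgt => /negP; apply.
  exact: leq_trans hn (leq_addr _ _).
case: (spine_corner_visited (leq0n (spine_child (n + size z).+1))) => p hvis.
have hd := size_cV_le p; rewrite /cV hvis /= size_spine in hd.
have := stay (p - n)%N; rewrite subnKC; last by apply: leq_trans hd; rewrite leqW // leq_addr.
by rewrite /cV hvis /= => /prefix_spine E; apply: hz; exists (size z).
Qed.

Lemma desc_spine_right_before (b : int) t : b < 0 -> V b = S t ->
  forall a, a <= b -> prefix (S t) (V a).
Proof.
move=> hb hVb a hab.
have [nb Enb] : exists nb : nat, b = - nb.+1%:Z by exists (absz (- b - 1)%R); lia.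
have [na Ena] : exists na : nat, a = - na.+1%:Z by exists (absz (- a - 1)%R); lia.
have : (nb <= na)%N by lia.
rewrite leq_eqVlt => /orP[/eqP E|hlt]; first by rewrite Ena -E -Enb hVb prefix_refl.
apply: contraLR (key_cornerZ_neg_lt hlt); rewrite -Ena -Enb -leNgt => hn.
apply/ltW; rewrite key_cornerZ hVb.
by apply: key_spine_lt_right hn; rewrite Ena; exact: right_side_cornerZ.
Qed.

Lemma left_right_on_spine (c : nat) (b : int) x : b < 0 -> V c = x -> V b = x ->
  exists t, x = S t.
Proof.
move=> hb hc hbx.
have [nb Enb] : exists nb : nat, b = - nb.+1%:Z by exists (absz (- b - 1)%R); lia.
case: (left_side_cornerZ c) => [[t [E _]]|[t [j [w [E hj]]]]].
  by exists t; rewrite -hc /cV E.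
case: (right_side_cornerZ nb) => [[t' [E' _]]|[t' [j' [w' [E' hj']]]]]; rewrite -Enb in E'.
  by exists t'; rewrite -hbx /cV E'.
exfalso.
have EE : S t ++ j :: w = S t' ++ j' :: w' by rewrite -E -E' -/(V c) -/(V b) hc hbx.
case: (ltngtP t t') => h.
- by move: hj; rewrite (spine_branch_child EE h) ltnn.
- by move: hj'; rewrite (spine_branch_child (esym EE) h) ltnn.
- subst t'; move: EE => /eqP; rewrite eqseq_cat // eqxx eqseq_cons /= => /andP[/eqP Ej _].
  by move: (ltn_trans hj hj'); rewrite Ej ltnn.
Qed.

Definition below_ancestors (x : vertex) := forall a, prefix a x -> a != x -> lab x < lab a.

Lemma below_ancestors_root : below_ancestors [::].
Proof. by move=> a; rewrite prefixs0 => /eqP ->; rewrite eqxx. Qed.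

(* Between [e] and its successor the contour only meets labels [>= L e], and it must enter
   the subtree of any new ancestor through that ancestor itself. *)
Lemma below_ancestors_csuccessor (e : int) :
  below_ancestors (V e) -> below_ancestors (V (Sc e)).
Proof.
move=> he a ha hne; rewrite -[lab (V (Sc e))]/(L (Sc e)) clab_csuccessor.
case E: (prefix a (V e)).
  by case: (eqVneq a (V e)) => [->|hne']; [|have := he a E hne']; rewrite /clab; lia.
have hgt := csuccessor_gt e.
have [d Hd] : exists d : nat, Sc e = e + d%:Z by exists (absz (Sc e - e)%R); lia.
rewrite Hd in ha hne; case: (contour_enter (negbT E) ha) => n [hn1 hn2].
case: (eqVneq n (e + d%:Z)) => [En|hnS]; first by move: hne; rewrite -hn2 En eqxx.
by have := @clab_ge_before_csuccessor e n; rewrite -hn2 /clab; lia.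
Qed.

Lemma cmax_spec i : [/\ 0 <= cmax nch lab i, L (cmax nch lab i) = - i%:Z &
  forall c : int, 0 <= c -> c < cmax nch lab i -> - i%:Z < L c].
Proof.
elim: i => [|i [h1 h2 h3]].
  by split => // c hc1 hc2; rewrite /cmax /= in hc2; lia.
rewrite -[cmax nch lab i.+1]/(Sc (cmax nch lab i)).
have hgt := csuccessor_gt (cmax nch lab i).
split; [lia|by rewrite clab_csuccessor h2; lia|move=> c hc1 hc2].
case: (ltrP c (cmax nch lab i)) => hc; first by have := h3 c hc1 hc; lia.
case: (eqVneq c (cmax nch lab i)) => [->|hne]; first by rewrite h2; lia.
by have := @clab_ge_before_csuccessor (cmax nch lab i) c; rewrite h2; lia.
Qed.

Lemma cmax_le i (c : int) : 0 <= c -> L c = - i%:Z -> cmax nch lab i <= c.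
Proof.
move=> hc hl; case: (cmax_spec i) => _ _ h3.
by case: (lerP (cmax nch lab i) c) => // hlt; have := h3 c hc hlt; lia.
Qed.

Local Notation M i := (lastc nch (gmin nch lab i)).

Lemma csuccessor_nat (n : nat) : Sc n = (absz (Sc n))%:Z.
Proof. by have := csuccessor_gt n; lia. Qed.

Lemma lastc_gmin i : [/\ V (M i) = gmin nch lab i, L (M i) = - i%:Z &
  forall m : nat, V m = gmin nch lab i -> (m <= M i)%N].
Proof.
elim: i => [|i [h1 h2 h3]].
  have [e1 e2] := @lastcP (gmin nch lab 0) 0%N erefl.
  by split => //; rewrite /clab e1 /= lab_root.
have hN := csuccessor_nat (M i).
have [e1 e2] := @lastcP (gmin nch lab i.+1) (absz (Sc (M i))) (esym (congr1 V hN)).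
split => //; rewrite /clab e1 -[gmin _ _ _]/(V (Sc (M i))) -/(L _) clab_csuccessor h2; lia.
Qed.

Lemma csuccessor_lastc_le i : Sc (M i) <= (M i.+1)%:Z.
Proof.
have hN := csuccessor_nat (M i).
have [_ _ h3] := lastc_gmin i.+1.
by have := h3 _ (esym (congr1 V hN)); rewrite hN; lia.
Qed.

Lemma lastc_gmin_lt i j : (i < j)%N -> (M i < M j)%N.
Proof.
elim: j => [|j IH] // hij.
have : (M j < M j.+1)%N by have := csuccessor_lastc_le j; have := csuccessor_gt (M j); lia.
move: hij; rewrite ltnS leq_eqVlt => /orP[/eqP ->|/IH] //; exact: ltn_trans.
Qed.

Lemma lab_gmin j : lab (gmin nch lab j) = - j%:Z.
Proof. by have [h1 h2 _] := lastc_gmin j; rewrite -h1. Qed.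

Lemma below_ancestors_gmin i : below_ancestors (gmin nch lab i).
Proof.
elim: i => [|i IH]; first exact: below_ancestors_root.
have [h1 _ _] := lastc_gmin i.
by rewrite -[gmin _ _ _]/(V (Sc (M i))); apply: below_ancestors_csuccessor; rewrite h1.
Qed.

(* Otherwise [V a] would be [gmin j] or a strict ancestor of it with the same label. *)
Lemma no_visit_after_lastc_gmin j (a c : nat) :
  (a <= M j < c)%N -> V a = V c -> lab (V a) = - j%:Z -> False.
Proof.
case/andP=> haM hMc hac hl; have [h1 _ h3] := lastc_gmin j.
have : prefix (V a) (gmin nch lab j) by rewrite -h1 (@prefix_cV_between a _ c) // haM ltnW.
case: (eqVneq (V a) (gmin nch lab j)) => [E _|hne hp].
  by have := h3 c; rewrite -hac E => /(_ erefl); rewrite leqNgt hMc.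
by have := below_ancestors_gmin hp hne; rewrite hl lab_gmin; lia.
Qed.

Definition branch_point (y : vertex) j :=
  prefix (gmin nch lab j) y /\
  forall x, prefix (gmin nch lab j) x -> prefix x y -> x <> gmin nch lab j ->
    ~ exists t, S t = x.

Lemma branch_point_lt y j1 j2 : (j1 < j2)%N -> branch_point y j1 -> branch_point y j2 -> False.
Proof.
move=> hj [hp1 hs1] [hp2 _].
have hne : gmin nch lab j2 != gmin nch lab j1.
  by apply/eqP => E; have := lab_gmin j2; rewrite E lab_gmin; lia.
case/orP: (prefix_total hp1 hp2) => hp; last first.
  by have := below_ancestors_gmin hp hne; rewrite !lab_gmin; lia.
have [h1 _ _] := lastc_gmin j1; have [h2 _ _] := lastc_gmin j2.
have hM := lastc_gmin_lt hj.
case: (classic (exists t, S t = gmin nch lab j1)) => [[s Es]|hoff].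
- have := @desc_after_last_spine_visit s (M j2); rewrite Es h2 => /(_ hM) hp'.
  apply: (hs1 (S s.+1)); last by exists s.+1.
  + by rewrite -Es; apply: spine_prefix.
  + exact: prefix_trans hp' hp2.
  + by rewrite -Es => /spine_inj /eqP; rewrite eqn_leq ltnn.
- by have := off_spine_after_last_visit hoff h1 hM; rewrite h2 hp.
Qed.

Lemma branch_point_uniq y j1 j2 : branch_point y j1 -> branch_point y j2 -> j1 = j2.
Proof.
move=> h1 h2; case: (ltngtP j1 j2) => // hlt; exfalso.
  exact: branch_point_lt hlt h1 h2.
exact: branch_point_lt hlt h2 h1.
Qed.

Section FirstCover.
Variables (y : vertex) (i cn : nat).
Hypotheses (visit_y : V cn = y) (lab_y : lab y = - i%:Z) (cn_le : (cn <= M i)%N).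

Let j0 := ex_minn (ex_intro (fun j => cn <= M j)%N i cn_le).

Lemma cn_le_j0 : (cn <= M j0)%N.
Proof. by rewrite /j0; case: ex_minnP. Qed.

Lemma j0_le_i : (j0 <= i)%N.
Proof. by rewrite /j0; case: ex_minnP => j _; apply. Qed.

Lemma gmin_j0_prefix : prefix (gmin nch lab j0) y.
Proof.
have := cn_le_j0; have := j0_le_i; rewrite /j0.
case: ex_minnP => [[|j'] _ hmin] hj'i hcn; first by rewrite prefix0s.
have [hg1 _ _] := lastc_gmin j'.+1.
have hlt : (M j' < cn)%N by rewrite ltnNge; apply/negP => /hmin; rewrite ltnn.
have [hh1 hh2 _] := lastc_gmin j'.
have hNN := csuccessor_nat (M j').
have hNc : Sc (M j') <= cn%:Z.
  case: (lerP (Sc (M j')) cn%:Z) => // hc'.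
  have := @clab_ge_before_csuccessor (M j') cn; rewrite hh2 /clab visit_y lab_y; lia.
have hVN : V (absz (Sc (M j'))) = gmin nch lab j'.+1 by rewrite -hNN.
rewrite -visit_y -hVN; apply: (@prefix_cV_between _ _ (M j'.+1)); last by rewrite hVN hg1.
by rewrite hcn andbT; lia.
Qed.

Lemma branch_point_j0 : branch_point y j0.
Proof.
split; first exact: gmin_j0_prefix.
move=> x hgx hxi hne [s Es].
have [hg1 _ _] := lastc_gmin j0.
have hs' : gmin nch lab j0 = S (size (gmin nch lab j0)).
  by apply: (prefix_spine (t := s)); rewrite Es.
have hsz : (size (gmin nch lab j0) < s)%N.
  have := size_prefix hgx; rewrite -Es size_spine leq_eqVlt => /orP [/eqP E|] //.
  by exfalso; apply: hne; rewrite hs' E Es.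
have hp2 : prefix (S (size (gmin nch lab j0)).+1) (V cn).
  by rewrite visit_y; apply: prefix_trans hxi; rewrite -Es; exact: spine_prefix.
have := spine_visit_before_desc (_ : V (M j0) = S (size (gmin nch lab j0))) hp2.
by rewrite -hs' => /(_ hg1); rewrite ltnNge cn_le_j0.
Qed.

End FirstCover.

Lemma exists_branch_point y i (cn : nat) : V cn = y -> lab y = - i%:Z -> (cn <= M i)%N ->
  exists2 j, (j <= i)%N & branch_point y j.
Proof. by move=> hv hl hc; eexists; [exact: (j0_le_i hc)|exact: (branch_point_j0 hv hl hc)]. Qed.

Lemma tpath_root y x : tpath [::] y x = prefix x y.
Proof.
rewrite /tpath; have -> : lcp [::] y = [::] by case: y.
by rewrite prefix0s andbT; case: x => [|z x] /=; rewrite ?prefix0s.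
Qed.

Lemma branch_pointE y j :
  (tpath [::] y (gmin nch lab j) /\
   forall x, tpath (gmin nch lab j) y x -> x <> gmin nch lab j -> ~ on_spine nch x) <->
  branch_point y j.
Proof.
rewrite tpath_root; split=> [[hp hs]|[hp hs]]; split=> // x.
  move=> hgx hxy hne [t Et]; apply: (hs x) hne _; last by apply/on_spineE; exists t.
  by rewrite /tpath lcp_prefix // hxy orbT hgx.
rewrite /tpath lcp_prefix // => /andP[/orP[hx|hx] hgx] hne.
  by exfalso; apply: hne; exact: prefix_antisym.
by case/on_spineE => t Et; apply: (hs x) => //; exists t.
Qed.

Section Geodesic.
Variables (eta : bool) (gamma : nat -> vertex).
Hypothesis gamma_ray : proper_geodesic_ray lab (Phi nch lab eta) gamma.

Lemma lab_gamma i : lab (gamma i) = - i%:Z.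
Proof. by case: gamma_ray => _ [_ [h _]]. Qed.

(* The arc cannot be followed backwards, as that would raise the label. *)
Lemma geodesic_arc i : exists e : int, V e = gamma i /\ V (Sc e) = gamma i.+1.
Proof.
case: gamma_ray => _ [_ [hl ha]].
case: (ha i) => k [[h1 h2]|[h1 h2]]; first by exists k.
by exfalso; have := clab_csuccessor k; rewrite /clab h1 h2 !hl; lia.
Qed.

Lemma below_ancestors_gamma i : below_ancestors (gamma i).
Proof.
elim: i => [|i IH]; first by case: gamma_ray => -> _; exact: below_ancestors_root.
by case: (geodesic_arc i) => e [h1 <-]; apply: below_ancestors_csuccessor; rewrite h1.
Qed.

Lemma gamma_not_in_path i j : (i < j)%N -> ~~ tpath [::] (gamma i) (gamma j).
Proof.
move=> hij; rewrite tpath_root; apply/negP => hp.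
have hne : gamma j != gamma i by apply/eqP => E; have := lab_gamma j; rewrite E lab_gamma; lia.
by have := below_ancestors_gamma hp hne; rewrite !lab_gamma; lia.
Qed.

(* A successor at a right corner would make [gamma i.+1] a spine vertex whose subtree contains
   [gamma i], which is impossible as the label decreases along [gamma]. *)
Lemma csuccessor_gamma_nonneg i (e : int) (c : nat) :
  V e = gamma i -> V (Sc e) = gamma i.+1 -> V c = gamma i.+1 -> 0 <= Sc e.
Proof.
move=> he1 he2 hc; case: (lerP 0 (Sc e)) => // hse; exfalso.
have [t Et] := left_right_on_spine hse (etrans hc (esym he2)) erefl.
have := desc_spine_right_before hse Et (ltW (csuccessor_gt e)).
rewrite -Et he1 he2 => hp.
have hne : gamma i.+1 != gamma i.
  by apply/eqP => E; have := lab_gamma i.+1; rewrite E lab_gamma; lia.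
by have := below_ancestors_gamma hp hne; rewrite !lab_gamma; lia.
Qed.

Lemma csuccessor_gamma_le i (e : int) :
  (forall c : nat, V c = gamma i -> (c <= M i)%N) ->
  V e = gamma i -> 0 <= Sc e -> Sc e <= Sc (M i).
Proof.
move=> visits_le he1 hse.
have hLe : L e = - i%:Z by rewrite /clab he1 lab_gamma.
have [_ hgm2 _] := lastc_gmin i.
case: (lerP 0 e) => he.
  have := visits_le (absz e); rewrite -nat_of_nonneg // => /(_ he1) hem.
  by apply: csuccessor_mono; [lia|rewrite hLe hgm2].
have [hc0 hcm _] := cmax_spec i.+1.
have hcl : cmax nch lab i.+1 <= Sc (M i).
  apply: cmax_le; first by have := csuccessor_gt (M i); lia.
  by rewrite clab_csuccessor hgm2; lia.
by apply: le_trans hcl; apply: csuccessor_min; [lia|rewrite hLe hcm; lia].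
Qed.

Lemma gamma_visit_le_lastc_gmin i (c : nat) : V c = gamma i -> (c <= M i)%N.
Proof.
elim: i c => [|i IH] c hc.
  have [_ _ h3] := lastc_gmin 0; apply: h3; rewrite hc; by case: gamma_ray.
case: (geodesic_arc i) => e [he1 he2].
have hse := csuccessor_gamma_nonneg he1 he2 hc.
have hle := csuccessor_gamma_le IH he1 hse.
have hMle := csuccessor_lastc_le i.
rewrite leqNgt; apply/negP => hlt.
apply: (@no_visit_after_lastc_gmin i.+1 (absz (Sc e)) c).
- by rewrite hlt andbT; lia.
- by rewrite -nat_of_nonneg // he2.
- by rewrite -nat_of_nonneg // he2 lab_gamma.
Qed.

Lemma left_corner_gamma_bounds i (c : int) : 0 <= c -> V c = gamma i ->
  cmax nch lab i <= c <= cmin nch lab i.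
Proof.
move=> hc hV; rewrite cmax_le ?andTb //; last by rewrite /clab hV lab_gamma.
rewrite /cmin (nat_of_nonneg hc) lez_nat gamma_visit_le_lastc_gmin //.
by rewrite -nat_of_nonneg.
Qed.

Lemma unique_branch_point_gamma i : (exists c : int, 0 <= c /\ V c = gamma i) ->
  exists! j : nat, (j <= i)%N /\ tpath [::] (gamma i) (gmin nch lab j) /\
    (forall x, tpath (gmin nch lab j) (gamma i) x -> x <> gmin nch lab j -> ~ on_spine nch x).
Proof.
case=> c [hc hV]; rewrite (nat_of_nonneg hc) in hV.
have [j hji hj] := exists_branch_point hV (lab_gamma i) (gamma_visit_le_lastc_gmin hV).
exists j; split; first by split; last exact/branch_pointE.
by move=> j' [_ /branch_pointE hj']; exact: branch_point_uniq hj hj'.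
Qed.

End Geodesic.

End Tree.

Theorem lemma2 (nch : vertex -> nat) (lab : vertex -> int) (eta : bool)
    (gamma : nat -> vertex) :
  in_S nch lab ->
  proper_geodesic_ray lab (Phi nch lab eta) gamma ->
  [/\ (* 1. *)
      (forall (i : nat) (c : int), 0 <= c -> cV nch c = gamma i ->
         cmax nch lab i <= c <= cmin nch lab i),
      (* 2. *)
      (forall i j : nat, (i < j)%N -> ~~ tpath [::] (gamma i) (gamma j))
    & (* 3. *)
      (forall i : nat, (exists c : int, 0 <= c /\ cV nch c = gamma i) ->
         exists! j : nat, (j <= i)%N /\ tpath [::] (gamma i) (gmin nch lab j) /\
           (forall x, tpath (gmin nch lab j) (gamma i) x -> x <> gmin nch lab j ->
              ~ on_spine nch x))].
Proof.
move=> [lab_root [lab_edge [S [S_ray [S_uniq lab_unbounded]]]]] gamma_ray.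
split.
- exact: (left_corner_gamma_bounds S_ray S_uniq lab_root lab_edge lab_unbounded gamma_ray).
- exact: (gamma_not_in_path S_ray S_uniq lab_root lab_edge lab_unbounded gamma_ray).
- exact: (unique_branch_point_gamma S_ray S_uniq lab_root lab_edge lab_unbounded gamma_ray).
Qed.
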